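(* Let $A\in\mathcal{C}_n$ and let $w\in\mathbb{R}^n$ be nonzero. Then $A$ is irreducible with respect to $ww^T$ if and only if there exists a minimal zero $u$ of $A$ with $w^Tu\ne0$.
   Context: $\mathcal{C}_n$ denotes the cone of copositive matrices: real symmetric $n\times n$ matrices $A$ with $x^TAx\ge 0$ for all $x\in\mathbb{R}^n_+$. For a nonzero matrix $M$, $A$ is irreducible with respect to $M$ if there does not exist $\gamma>0$ with $A-\gamma M\in\mathcal{C}_n$. A zero of $A$ is a nonzero $u\in\mathbb{R}^n_+$ with $u^TAu=0$; $\operatorname{Supp}(u)=\{i:u_i\ne0\}$; a zero $u$ is minimal if there is no zero $v$ with $\operatorname{Supp}(v)\subsetneq\operatorname{Supp}(u)$. *)

(* real numbers are Stdlib's R.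
   Vectors in R^n are functions nat -> R (only indices 0..n-1 matter);
   n x n matrices are functions nat -> nat -> R (only indices < n matter). *)
From Stdlib Require Import Reals.
Open Scope R_scope.

Definition vec := nat -> R.
Definition mat := nat -> nat -> R.

Fixpoint sumn (n : nat) (f : nat -> R) : R :=
  match n with
  | O => 0
  | S k => sumn k f + f k
  end.

Definition qform (n : nat) (A : mat) (x y : vec) : R :=
  sumn n (fun i => sumn n (fun j => x i * A i j * y j)).

Definition dot (n : nat) (w u : vec) : R := sumn n (fun i => w i * u i).

Definition symmetric (n : nat) (A : mat) : Prop :=
  forall i j, (i < n)%nat -> (j < n)%nat -> A i j = A j i.

Definition nonneg (n : nat) (x : vec) : Prop :=
  forall i, (i < n)%nat -> 0 <= x i.

Definition nonzero_vec (n : nat) (x : vec) : Prop :=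
  exists i, (i < n)%nat /\ x i <> 0.

Definition copositive (n : nat) (A : mat) : Prop :=
  symmetric n A /\ forall x, nonneg n x -> 0 <= qform n A x x.

Definition msub_scal (A : mat) (gamma : R) (M : mat) : mat :=
  fun i j => A i j - gamma * M i j.

(* A irreducible with respect to M (M assumed nonzero by the user) *)
Definition irreducible_wrt (n : nat) (A M : mat) : Prop :=
  ~ exists gamma, 0 < gamma /\ copositive n (msub_scal A gamma M).

Definition outer (w : vec) : mat := fun i j => w i * w j.

Definition is_zero_of (n : nat) (A : mat) (u : vec) : Prop :=
  nonneg n u /\ nonzero_vec n u /\ qform n A u u = 0.

Definition supp_strict_sub (n : nat) (v u : vec) : Prop :=
  (forall i, (i < n)%nat -> v i <> 0 -> u i <> 0) /\
  (exists i, (i < n)%nat /\ u i <> 0 /\ v i = 0).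

Definition minimal_zero (n : nat) (A : mat) (u : vec) : Prop :=
  is_zero_of n A u /\ ~ exists v, is_zero_of n A v /\ supp_strict_sub n v u.

From Stdlib Require Import Reals Lra Lia Classical List Wf_nat.
From Coquelicot Require Import Compactness.
Open Scope R_scope.

(** Since x^T (A - g w w^T) x = x^T A x - g (w^T x)^2, a zero u of A with
    w^T u <> 0 forbids A - g w w^T from being copositive for every g > 0;
    this is the easy direction.  Conversely, suppose every minimal zero is
    orthogonal to w.  Using the first-order conditions at a zero (u^T A >= 0,
    with equality on Supp(u)) and the ratio test x - t u, every zero lies
    above a minimal one with the same value of w^T, so all zeros are
    orthogonal to w.  We then prove x^T A x >= g (w^T x)^2 on every face of
    the nonnegative orthant by induction on the size of the face: a face
    containing a zero u reduces, again by the ratio test, to the smaller faces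
    obtained by dropping an index of Supp(u); a face without zeros carries a
    uniform bound by compactness of the unit box (Coquelicot).  The bound on
    the whole orthant says exactly that A - g w w^T is copositive. *)

Lemma sumn_ext n f g : (forall i, (i < n)%nat -> f i = g i) -> sumn n f = sumn n g.
Proof.
  induction n as [|n IH]; intros H; simpl; auto.
  rewrite IH by (intros; apply H; lia). rewrite H by lia. auto.
Qed.

Lemma sumn_plus n f g : sumn n (fun i => f i + g i) = sumn n f + sumn n g.
Proof. induction n as [|n IH]; simpl; [ring|]. rewrite IH. ring. Qed.

Lemma sumn_scal n c f : sumn n (fun i => c * f i) = c * sumn n f.
Proof. induction n as [|n IH]; simpl; [ring|]. rewrite IH. ring. Qed.

Lemma sumn_zero n f : (forall i, (i < n)%nat -> f i = 0) -> sumn n f = 0.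
Proof.
  induction n as [|n IH]; intros H; simpl; auto.
  rewrite IH by (intros; apply H; lia). rewrite H by lia. ring.
Qed.

Lemma sumn_le n f g : (forall i, (i < n)%nat -> f i <= g i) -> sumn n f <= sumn n g.
Proof.
  induction n as [|n IH]; intros H; simpl; [lra|].
  assert (sumn n f <= sumn n g) by (apply IH; intros; apply H; lia).
  assert (f n <= g n) by (apply H; lia). lra.
Qed.

Lemma sumn_nonneg n f : (forall i, (i < n)%nat -> 0 <= f i) -> 0 <= sumn n f.
Proof.
  intros H. rewrite <- (sumn_zero n (fun _ => 0)) by auto. apply sumn_le; auto.
Qed.

Lemma sumn_ge_term n f i :
  (forall j, (j < n)%nat -> 0 <= f j) -> (i < n)%nat -> f i <= sumn n f.
Proof.
  induction n as [|n IH]; intros H Hi; simpl; [lia|].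
  assert (0 <= sumn n f) by (apply sumn_nonneg; intros; apply H; lia).
  destruct (Nat.eq_dec i n) as [->|Hne]; [lra|].
  assert (f i <= sumn n f) by (apply IH; auto; lia).
  assert (0 <= f n) by (apply H; lia). lra.
Qed.

Lemma sumn_abs n f : Rabs (sumn n f) <= sumn n (fun i => Rabs (f i)).
Proof.
  induction n as [|n IH]; simpl; [rewrite Rabs_R0; lra|].
  eapply Rle_trans; [apply Rabs_triang | lra].
Qed.

Lemma sumn_swap n m (f : nat -> nat -> R) :
  sumn n (fun i => sumn m (fun j => f i j)) = sumn m (fun j => sumn n (fun i => f i j)).
Proof.
  induction n as [|n IH]; simpl; [symmetry; apply sumn_zero; auto|].
  rewrite IH, <- sumn_plus. auto.
Qed.

Definition ev (i : nat) : vec := fun j => if Nat.eqb j i then 1 else 0.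

Lemma sumn_ev n f i : (i < n)%nat -> sumn n (fun j => f j * ev i j) = f i.
Proof.
  induction n as [|n IH]; intros H; simpl; [lia|]. unfold ev at 2.
  destruct (Nat.eqb_spec n i) as [<-|Hne].
  - rewrite sumn_zero; [ring|]. intros j Hj. unfold ev.
    destruct (Nat.eqb_spec j n); [lia | ring].
  - rewrite IH by lia. ring.
Qed.

Definition vecmat (n : nat) (A : mat) (u : vec) (j : nat) : R :=
  sumn n (fun i => u i * A i j).

Definition vadd (x : vec) (s : R) (y : vec) : vec := fun i => x i + s * y i.

Lemma qform_vecmat n A x y : qform n A x y = sumn n (fun j => vecmat n A x j * y j).
Proof.
  unfold qform, vecmat. rewrite sumn_swap. apply sumn_ext. intros j _.
  rewrite Rmult_comm, <- sumn_scal. apply sumn_ext. intros; ring.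
Qed.

Lemma qform_ev n A x j : (j < n)%nat -> qform n A x (ev j) = vecmat n A x j.
Proof. intros Hj. rewrite qform_vecmat. apply sumn_ev; auto. Qed.

Lemma qform_ev_ev n A j : (j < n)%nat -> qform n A (ev j) (ev j) = A j j.
Proof.
  intros Hj. rewrite qform_ev by auto. unfold vecmat.
  rewrite (sumn_ext n _ (fun i => A i j * ev j i)) by (intros; ring).
  apply (sumn_ev n (fun k => A k j)); auto.
Qed.

Lemma qform_sym n A x y : symmetric n A -> qform n A x y = qform n A y x.
Proof.
  intros HS. unfold qform. rewrite sumn_swap. apply sumn_ext; intros i Hi.
  apply sumn_ext; intros j Hj. rewrite (HS j i) by auto. ring.
Qed.

Lemma qform_vadd_l n A x s y z : qform n A (vadd x s y) z = qform n A x z + s * qform n A y z.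
Proof.
  unfold qform, vadd. rewrite <- sumn_scal, <- sumn_plus. apply sumn_ext; intros i _.
  rewrite <- sumn_scal, <- sumn_plus. apply sumn_ext; intros; ring.
Qed.

Lemma qform_vadd_r n A x s y z : qform n A z (vadd x s y) = qform n A z x + s * qform n A z y.
Proof.
  unfold qform, vadd. rewrite <- sumn_scal, <- sumn_plus. apply sumn_ext; intros i _.
  rewrite <- sumn_scal, <- sumn_plus. apply sumn_ext; intros; ring.
Qed.

Lemma qform_expand n A x s y : symmetric n A ->
  qform n A (vadd x s y) (vadd x s y)
  = qform n A x x + 2 * s * qform n A x y + s * s * qform n A y y.
Proof.
  intros HS. rewrite qform_vadd_l, !qform_vadd_r, (qform_sym n A y x HS). ring.
Qed.

Lemma qform_ext n A x x' : (forall i, (i < n)%nat -> x i = x' i) -> qform n A x x = qform n A x' x'.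
Proof.
  intros H. unfold qform. apply sumn_ext; intros i Hi. apply sumn_ext; intros j Hj.
  rewrite !H by auto. auto.
Qed.

Lemma qform_scale n A x y s :
  (forall i, (i < n)%nat -> x i = s * y i) -> qform n A x x = s * s * qform n A y y.
Proof.
  intros H. unfold qform. rewrite <- sumn_scal. apply sumn_ext; intros i Hi.
  rewrite <- sumn_scal. apply sumn_ext; intros j Hj. rewrite !H by auto. ring.
Qed.

Lemma dot_vadd n w x s y : dot n w (vadd x s y) = dot n w x + s * dot n w y.
Proof.
  unfold dot, vadd. rewrite <- sumn_scal, <- sumn_plus. apply sumn_ext; intros; ring.
Qed.

Lemma sumn_square n a : sumn n (fun i => sumn n (fun j => a i * a j)) = sumn n a * sumn n a.
Proof.
  rewrite (sumn_ext n _ (fun i => sumn n a * a i)).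
  - apply sumn_scal.
  - intros i _. rewrite sumn_scal. ring.
Qed.

Lemma qform_msub_outer n A g w x :
  qform n (msub_scal A g (outer w)) x x = qform n A x x - g * (dot n w x * dot n w x).
Proof.
  unfold dot. rewrite <- (sumn_square n (fun i => w i * x i)).
  unfold Rminus. rewrite Ropp_mult_distr_l.
  unfold qform, msub_scal, outer. rewrite <- sumn_scal, <- sumn_plus.
  apply sumn_ext; intros i _.
  rewrite <- sumn_scal, <- sumn_plus. apply sumn_ext; intros; ring.
Qed.

Lemma slope_nonneg (p a eps : R) :
  0 < eps -> (forall s, 0 < s <= eps -> 0 <= 2 * s * p + s * s * a) -> 0 <= p.
Proof.
  intros Heps H. destruct (Rle_or_lt 0 p) as [|Hp]; auto.
  assert (Ha : 0 <= Rabs a) by apply Rabs_pos.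
  set (s := Rmin eps (- p / (Rabs a + 1))).
  assert (Hs : 0 < s) by (apply Rmin_glb_lt; auto; apply Rdiv_lt_0_compat; lra).
  assert (Hs_eps : s <= eps) by apply Rmin_l.
  assert (Hs_p : s * (Rabs a + 1) <= - p).
  { apply (Rmult_le_reg_r (/ (Rabs a + 1))); [apply Rinv_0_lt_compat; lra|].
    replace (s * (Rabs a + 1) * / (Rabs a + 1)) with s by (field; lra). apply Rmin_r. }
  assert (Hsa : s * a <= s * Rabs a) by (apply Rmult_le_compat_l; [lra | apply Rle_abs]).
  specialize (H s (conj Hs Hs_eps)). nra.
Qed.

(** First-order conditions at a zero u of a copositive matrix A:
    u^T A is nonnegative, and vanishes on the support of u. *)
Section FirstOrder.

Variables (n : nat) (A : mat) (u : vec).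
Hypothesis HC : copositive n A.
Hypothesis Hu : nonneg n u.
Hypothesis Hq : qform n A u u = 0.

Lemma zero_line j s : (j < n)%nat -> nonneg n (vadd u s (ev j)) ->
  0 <= 2 * s * vecmat n A u j + s * s * A j j.
Proof.
  intros Hj Hn. destruct HC as [HS Hcop]. specialize (Hcop _ Hn).
  rewrite qform_expand, Hq, qform_ev, qform_ev_ev in Hcop by auto. lra.
Qed.

Lemma vecmat_zero_nonneg j : (j < n)%nat -> 0 <= vecmat n A u j.
Proof.
  intros Hj. apply (slope_nonneg _ (A j j) 1); [lra|]. intros s Hs.
  apply zero_line; auto. intros i Hi. unfold vadd, ev.
  assert (0 <= u i) by auto. destruct (Nat.eqb i j); lra.
Qed.

Lemma vecmat_zero_supp j : (j < n)%nat -> u j <> 0 -> vecmat n A u j = 0.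
Proof.
  intros Hj Huj. assert (Huj' : 0 < u j) by (assert (0 <= u j) by auto; lra).
  enough (0 <= - vecmat n A u j) by (assert (0 <= vecmat n A u j) by
    (apply vecmat_zero_nonneg; auto); lra).
  apply (slope_nonneg _ (A j j) (u j)); auto. intros s Hs.
  replace (2 * s * - vecmat n A u j + s * s * A j j)
    with (2 * (- s) * vecmat n A u j + (- s) * (- s) * A j j) by ring.
  apply zero_line; auto. intros i Hi. unfold vadd, ev.
  assert (0 <= u i) by auto. destruct (Nat.eqb_spec i j) as [->|]; lra.
Qed.

Lemma zero_cross_nonneg y : nonneg n y -> 0 <= qform n A u y.
Proof.
  intros Hy. rewrite qform_vecmat. apply sumn_nonneg. intros j Hj.
  apply Rmult_le_pos; [apply vecmat_zero_nonneg | apply Hy]; auto.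
Qed.

Lemma zero_cross_supp y :
  (forall j, (j < n)%nat -> y j <> 0 -> u j <> 0) -> qform n A u y = 0.
Proof.
  intros Hy. rewrite qform_vecmat. apply sumn_zero. intros j Hj.
  destruct (Req_dec (y j) 0) as [E|E]; [rewrite E; ring|].
  rewrite vecmat_zero_supp by auto. ring.
Qed.

End FirstOrder.

(** Supports, encoded as boolean masks on the indices, and their sizes. *)

Definition supported (n : nat) (m : nat -> bool) (x : vec) : Prop :=
  forall i, (i < n)%nat -> m i = false -> x i = 0.

Fixpoint card (n : nat) (m : nat -> bool) : nat :=
  match n with
  | O => O
  | S k => (card k m + (if m k then 1 else 0))%nat
  end.

Definition supp_mask (u : vec) : nat -> bool :=
  fun i => if Req_EM_T (u i) 0 then false else true.

Definition mrem (m : nat -> bool) (i0 : nat) : nat -> bool :=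
  fun j => andb (m j) (negb (Nat.eqb j i0)).

Lemma card_le n m m' :
  (forall i, (i < n)%nat -> m' i = true -> m i = true) -> (card n m' <= card n m)%nat.
Proof.
  induction n as [|n IH]; intros H; simpl; [lia|].
  assert (card n m' <= card n m)%nat by (apply IH; intros; apply H; auto; lia).
  destruct (m' n) eqn:E'; [rewrite (H n) by (auto; lia); lia|].
  destruct (m n); lia.
Qed.

Lemma card_lt n m m' :
  (forall i, (i < n)%nat -> m' i = true -> m i = true) ->
  (exists i, (i < n)%nat /\ m i = true /\ m' i = false) -> (card n m' < card n m)%nat.
Proof.
  induction n as [|n IH]; intros H [i [Hi [Hm Hm']]]; simpl; [lia|].
  assert (card n m' <= card n m)%nat by (apply card_le; intros; apply H; auto; lia).
  destruct (Nat.eq_dec i n) as [->|Hne].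
  - rewrite Hm, Hm'. lia.
  - assert (card n m' < card n m)%nat.
    { apply IH; [intros; apply H; auto; lia | exists i; repeat split; auto; lia]. }
    destruct (m' n) eqn:E'; [rewrite (H n) by (auto; lia); lia|].
    destruct (m n); lia.
Qed.

Lemma card_mrem n m i0 : (i0 < n)%nat -> m i0 = true -> (card n (mrem m i0) < card n m)%nat.
Proof.
  intros Hi0 Hm. apply card_lt.
  - intros i _ H. unfold mrem in H. apply andb_prop in H. tauto.
  - exists i0. unfold mrem. rewrite Nat.eqb_refl, Bool.andb_false_r. auto.
Qed.

Lemma supp_mask_true u i : supp_mask u i = true <-> u i <> 0.
Proof. unfold supp_mask. destruct (Req_EM_T (u i) 0); split; congruence. Qed.

Lemma card_supp_strict n v u :
  supp_strict_sub n v u -> (card n (supp_mask v) < card n (supp_mask u))%nat.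
Proof.
  intros [Hsub [i [Hi [Hu Hv]]]]. apply card_lt.
  - intros j Hj. rewrite !supp_mask_true. auto.
  - exists i. rewrite supp_mask_true. split; [|split]; auto.
    unfold supp_mask. destruct (Req_EM_T (v i) 0); congruence.
Qed.

(** The ratio test: subtracting the largest multiple of u that keeps x
    nonnegative kills an entry of Supp(u). *)

Lemma argmin_exists n (P : nat -> Prop) (r : nat -> R) :
  (exists i, (i < n)%nat /\ P i) ->
  exists i0, (i0 < n)%nat /\ P i0 /\ forall i, (i < n)%nat -> P i -> r i0 <= r i.
Proof.
  induction n as [|n IH]; intros [i [Hi HP]]; [lia|].
  destruct (classic (exists j, (j < n)%nat /\ P j)) as [Hex|Hnone].
  - destruct (IH Hex) as [i0 [Hi0 [HP0 Hmin]]].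
    destruct (classic (P n /\ r n < r i0)) as [[HPn Hlt]|Hn].
    + exists n. repeat split; auto. intros j Hj HPj.
      destruct (Nat.eq_dec j n) as [->|]; [lra|].
      assert (r i0 <= r j) by (apply Hmin; auto; lia). lra.
    + exists i0. repeat split; auto. intros j Hj HPj.
      destruct (Nat.eq_dec j n) as [->|]; [|apply Hmin; auto; lia].
      apply Rnot_lt_le. intros Hlt. apply Hn. auto.
  - exists n. repeat split; auto.
    + destruct (Nat.eq_dec i n) as [<-|]; auto.
      exfalso. apply Hnone. exists i. split; auto. lia.
    + intros j Hj HPj. destruct (Nat.eq_dec j n) as [->|]; [lra|].
      exfalso. apply Hnone. exists j. split; auto. lia.
Qed.

(* The ratio test proper, with t = min_{u_i <> 0} x_i / u_i. *)
Lemma ratio_step n x u : nonneg n x -> nonneg n u -> nonzero_vec n u ->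
  exists t i0, 0 <= t /\ (i0 < n)%nat /\ u i0 <> 0 /\
    nonneg n (vadd x (- t) u) /\ vadd x (- t) u i0 = 0.
Proof.
  intros Hx Hu Hnz.
  destruct (argmin_exists n (fun i => u i <> 0) (fun i => x i / u i) Hnz)
    as [i0 [Hi0 [Hui0 Hmin]]].
  assert (Hpos : forall i, (i < n)%nat -> u i <> 0 -> 0 < u i)
    by (intros i Hi Hui; assert (0 <= u i) by auto; lra).
  exists (x i0 / u i0), i0. repeat split; auto.
  - unfold Rdiv. apply Rmult_le_pos; [auto | apply Rlt_le, Rinv_0_lt_compat; auto].
  - intros i Hi. unfold vadd. destruct (Req_dec (u i) 0) as [E|E].
    + rewrite E. assert (0 <= x i) by auto. lra.
    + specialize (Hmin i Hi E). specialize (Hpos i Hi E).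
      apply (Rmult_le_compat_r (u i)) in Hmin; [|lra].
      replace (x i / u i * u i) with (x i) in Hmin by (field; lra). lra.
  - unfold vadd. field. auto.
Qed.

Lemma dot_nonzero_vec n w x : dot n w x <> 0 -> nonzero_vec n x.
Proof.
  intros H. apply NNPP. intros Hn. apply H. unfold dot. apply sumn_zero. intros i Hi.
  destruct (Req_dec (x i) 0) as [E|E]; [rewrite E; ring|].
  exfalso. apply Hn. exists i. auto.
Qed.

(* If a zero v with w^T v = 0 sits strictly below the zero u, then
   u - t v is a zero strictly below u with the same value of w^T. *)
Lemma zero_subtract n A w u v : copositive n A ->
  is_zero_of n A u -> dot n w u <> 0 ->
  is_zero_of n A v -> supp_strict_sub n v u -> dot n w v = 0 ->
  exists u', is_zero_of n A u' /\ supp_strict_sub n u' u /\ dot n w u' = dot n w u.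
Proof.
  intros HC [Hu [_ Hqu]] Hdu [Hv [Hvnz Hqv]] [Hsub _] Hdv.
  destruct (ratio_step n u v Hu Hv Hvnz) as [t [i0 [_ [Hi0 [Hvi0 [Hnn Hkill]]]]]].
  set (u' := vadd u (- t) v) in *.
  assert (Hdu' : dot n w u' = dot n w u) by (unfold u'; rewrite dot_vadd, Hdv; ring).
  exists u'. split; [split; [|split]|split]; auto.
  - apply (dot_nonzero_vec n w). rewrite Hdu'. auto.
  - unfold u'. rewrite qform_expand by apply HC.
    rewrite Hqu, Hqv, (zero_cross_supp n A u) by auto. ring.
  - split.
    + intros i Hi Hu'i Hui. apply Hu'i. unfold u', vadd. rewrite Hui.
      destruct (Req_dec (v i) 0) as [E|E]; [rewrite E; ring|].
      exfalso. apply (Hsub i Hi E Hui).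
    + exists i0. auto.
Qed.

Lemma minimal_zero_exists n A w u : copositive n A ->
  is_zero_of n A u -> dot n w u <> 0 -> exists v, minimal_zero n A v /\ dot n w v <> 0.
Proof.
  intros HC. remember (card n (supp_mask u)) as k eqn:Hk. revert u Hk.
  induction k as [k IH] using lt_wf_ind. intros u Hk Hu Hdu.
  destruct (classic (exists v, is_zero_of n A v /\ supp_strict_sub n v u))
    as [[v [Hv Hvu]]|Hnone].
  - assert (Hlt := card_supp_strict n v u Hvu).
    destruct (Req_dec (dot n w v) 0) as [Hdv|Hdv].
    + destruct (zero_subtract n A w u v HC Hu Hdu Hv Hvu Hdv) as [u' [Hu' [Hu'u Hdu']]].
      apply (IH (card n (supp_mask u'))) with u'; auto.
      * rewrite Hk. apply card_supp_strict. auto.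
      * rewrite Hdu'. auto.
    + apply (IH (card n (supp_mask v))) with v; auto. lia.
  - exists u. split; [split|]; auto.
Qed.

Lemma common_pos_bound {T : Type} (l : list T) (Q : T -> R -> Prop) :
  (forall t g g', Q t g -> 0 < g' <= g -> Q t g') ->
  (forall t, In t l -> exists g, 0 < g /\ Q t g) ->
  exists g, 0 < g /\ forall t, In t l -> Q t g.
Proof.
  intros Hmono. induction l as [|t l IH]; intros H.
  - exists 1. split; [lra | intros _ []].
  - destruct IH as [g1 [Hg1 H1]]; [intros; apply H; right; auto|].
    destruct (H t (or_introl eq_refl)) as [g2 [Hg2 H2]].
    assert (Hg : 0 < Rmin g1 g2) by (apply Rmin_glb_lt; auto).
    exists (Rmin g1 g2). split; auto. intros t' [<-|Ht'].
    + apply (Hmono t g2); auto. split; auto. apply Rmin_r.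
    + apply (Hmono t' g1); auto. split; auto. apply Rmin_l.
Qed.

(** Bounded Lipschitz functions on the unit box [0,1]^n, and the fact that
    a positive one is bounded below by a positive constant (compactness). *)

Definition inbox (n : nat) (x : vec) : Prop := forall i, (i < n)%nat -> 0 <= x i <= 1.

Definition Lip (n : nat) (F : vec -> R) : Prop :=
  exists K B, 0 <= K /\ 0 <= B /\ (forall x, inbox n x -> Rabs (F x) <= B) /\
   (forall x t d, inbox n x -> inbox n t -> 0 <= d ->
     (forall i, (i < n)%nat -> Rabs (x i - t i) <= d) -> Rabs (F x - F t) <= K * d).

Lemma Lip_const n c : Lip n (fun _ => c).
Proof.
  exists 0, (Rabs c). repeat split; [lra | apply Rabs_pos | intros; lra |].
  intros. replace (c - c) with 0 by ring. rewrite Rabs_R0. lra.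
Qed.

Lemma Lip_coord n i : (i < n)%nat -> Lip n (fun x => x i).
Proof.
  intros Hi. exists 1, 1. repeat split; try lra.
  - intros x Hx. destruct (Hx i Hi). rewrite Rabs_pos_eq; lra.
  - intros x t d _ _ _ H. rewrite Rmult_1_l. auto.
Qed.

Lemma Lip_plus n F G : Lip n F -> Lip n G -> Lip n (fun x => F x + G x).
Proof.
  intros [K1 [B1 [HK1 [HB1 [H1 H2]]]]] [K2 [B2 [HK2 [HB2 [H3 H4]]]]].
  exists (K1 + K2), (B1 + B2). repeat split; try lra.
  - intros x Hx. eapply Rle_trans; [apply Rabs_triang|].
    specialize (H1 x Hx). specialize (H3 x Hx). lra.
  - intros x t d Hx Ht Hd Hc.
    replace (F x + G x - (F t + G t)) with ((F x - F t) + (G x - G t)) by ring.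
    eapply Rle_trans; [apply Rabs_triang|].
    specialize (H2 x t d Hx Ht Hd Hc). specialize (H4 x t d Hx Ht Hd Hc). lra.
Qed.

Lemma Lip_mult n F G : Lip n F -> Lip n G -> Lip n (fun x => F x * G x).
Proof.
  intros [K1 [B1 [HK1 [HB1 [H1 H2]]]]] [K2 [B2 [HK2 [HB2 [H3 H4]]]]].
  exists (B1 * K2 + B2 * K1), (B1 * B2). repeat split.
  - apply Rplus_le_le_0_compat; apply Rmult_le_pos; auto.
  - apply Rmult_le_pos; auto.
  - intros x Hx. rewrite Rabs_mult. apply Rmult_le_compat; try apply Rabs_pos; auto.
  - intros x t d Hx Ht Hd Hc.
    replace (F x * G x - F t * G t) with (F x * (G x - G t) + G t * (F x - F t)) by ring.
    eapply Rle_trans; [apply Rabs_triang|]. rewrite !Rabs_mult.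
    assert (Rabs (F x) * Rabs (G x - G t) <= B1 * (K2 * d))
      by (apply Rmult_le_compat; try apply Rabs_pos; auto).
    assert (Rabs (G t) * Rabs (F x - F t) <= B2 * (K1 * d))
      by (apply Rmult_le_compat; try apply Rabs_pos; auto).
    nra.
Qed.

Lemma Lip_sumn n k (G : nat -> vec -> R) : (forall i, (i < k)%nat -> Lip n (G i)) ->
  Lip n (fun x => sumn k (fun i => G i x)).
Proof.
  induction k as [|k IH]; intros H; simpl; [apply Lip_const|].
  apply Lip_plus; [apply IH; intros; apply H | apply H]; lia.
Qed.

Lemma Lip_qform n A : Lip n (fun x => qform n A x x).
Proof.
  unfold qform. apply (Lip_sumn n n (fun i x => sumn n (fun j => x i * A i j * x j))).
  intros i Hi. apply (Lip_sumn n n (fun j x => x i * A i j * x j)). intros j Hj.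
  apply Lip_mult; [apply Lip_mult; [apply Lip_coord; auto | apply Lip_const]|].
  apply Lip_coord; auto.
Qed.

Lemma Lip_agree n F x t : Lip n F -> inbox n x -> inbox n t ->
  (forall i, (i < n)%nat -> x i = t i) -> F x = F t.
Proof.
  intros [K [B [HK [_ [_ HL]]]]] Hx Ht E.
  assert (H : Rabs (F x - F t) <= K * 0).
  { apply HL; auto; [lra|]. intros i Hi. rewrite E, Rminus_diag, Rabs_R0 by auto. lra. }
  rewrite Rmult_0_r in H. assert (H0 := Rabs_pos (F x - F t)).
  destruct (Req_dec (F x - F t) 0) as [E0|E0]; [lra|].
  assert (0 < Rabs (F x - F t)) by (apply Rabs_pos_lt; auto). lra.
Qed.

Fixpoint toV (n : nat) : Tn n R -> vec :=
  match n with
  | O => fun _ _ => 0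
  | S n' => fun x i => match i with O => fst x | S i' => toV n' (snd x) i' end
  end.

Fixpoint ofV (n : nat) (x : vec) : Tn n R :=
  match n with
  | O => tt
  | S n' => (x O, ofV n' (fun i => x (S i)))
  end.

Fixpoint cstT (n : nat) (c : R) : Tn n R :=
  match n with O => tt | S n' => (c, cstT n' c) end.

Lemma toV_ofV n x i : (i < n)%nat -> toV n (ofV n x) i = x i.
Proof.
  revert x i. induction n as [|n IH]; intros x i Hi; [lia|].
  destruct i; simpl; auto. rewrite IH by lia. auto.
Qed.

Lemma bounded_inbox n X : bounded_n n (cstT n 0) (cstT n 1) X <-> inbox n (toV n X).
Proof.
  induction n as [|n IH]; simpl; [split; auto; intros _ i Hi; lia|].
  destruct X as [x1 X2]. simpl. split.
  - intros [H1 H2] i Hi. destruct i; simpl; [lra|]. apply IH; auto. lia.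
  - intros H. split; [apply (H O); lia|]. apply IH. intros i Hi. apply (H (S i)). lia.
Qed.

Lemma close_coord n d X T : close_n n d X T ->
  forall i, (i < n)%nat -> Rabs (toV n X i - toV n T i) < d.
Proof.
  induction n as [|n IH]; simpl; intros H i Hi; [lia|].
  destruct X as [x1 X2], T as [t1 T2]. destruct H as [H1 H2].
  destruct i; simpl; auto. apply IH; auto. lia.
Qed.

Lemma box_min n F : Lip n F -> (forall x, inbox n x -> 0 < F x) ->
  exists c, 0 < c /\ forall x, inbox n x -> c <= F x.
Proof.
  intros HL Hpos. assert (HL' := HL). destruct HL' as [K [B [HK [_ [_ HLK]]]]].
  set (G := fun X => F (toV n X)).
  (* around a box point t, F stays above G t / 2 within radius delta t *)
  set (delta := fun X => match Rlt_dec 0 (G X / (2 * (K + 1))) with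
    | left H => mkposreal _ H | right _ => mkposreal 1 Rlt_0_1 end).
  apply NNPP. intros Hno.
  apply (compactness_list n (cstT n 0) (cstT n 1) delta). intros [l Hl]. apply Hno.
  destruct (common_pos_bound l (fun t g => bounded_n n (cstT n 0) (cstT n 1) t -> g <= G t))
    as [c [Hc Hcl]].
  { intros t g g' Hg [_ Hle] Hb. specialize (Hg Hb). lra. }
  { intros t _. destruct (classic (bounded_n n (cstT n 0) (cstT n 1) t)) as [Hb|Hb].
    - exists (G t). split; [apply Hpos, bounded_inbox; auto | auto with real].
    - exists 1. split; [lra | tauto]. }
  exists (c / 2). split; [lra|]. intros x Hx.
  assert (HX : bounded_n n (cstT n 0) (cstT n 1) (ofV n x)).
  { apply bounded_inbox. intros i Hi. rewrite toV_ofV; auto. }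
  destruct (Hl _ HX) as [t [Hin [Hbt Hclose]]].
  assert (Hbt' := proj1 (bounded_inbox n t) Hbt).
  assert (HGt : 0 < G t) by (apply Hpos; auto).
  assert (Hd : pos (delta t) = G t / (2 * (K + 1))).
  { unfold delta. destruct (Rlt_dec 0 (G t / (2 * (K + 1)))) as [h|h]; simpl; auto.
    exfalso. apply h. apply Rdiv_lt_0_compat; lra. }
  assert (HXin : inbox n (toV n (ofV n x))) by (apply bounded_inbox; auto).
  assert (Ex : F x = F (toV n (ofV n x)))
    by (apply (Lip_agree n); auto; intros i Hi; rewrite toV_ofV; auto).
  assert (Hdist : Rabs (F (toV n (ofV n x)) - G t) <= K * (G t / (2 * (K + 1)))).
  { apply HLK; auto; [apply Rlt_le, Rdiv_lt_0_compat; lra|].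
    intros i Hi. apply Rlt_le. rewrite <- Hd. apply close_coord; auto. }
  assert (Hhalf : K * (G t / (2 * (K + 1))) <= G t / 2).
  { apply (Rmult_le_reg_r (2 * (K + 1))); [lra|].
    replace (K * (G t / (2 * (K + 1))) * (2 * (K + 1))) with (K * G t) by (field; lra).
    replace (G t / 2 * (2 * (K + 1))) with (G t * (K + 1)) by (field; lra). nra. }
  assert (Hct := Hcl t Hin Hbt).
  assert (Hlow := Rle_abs (G t - F (toV n (ofV n x)))).
  rewrite Rabs_minus_sym in Hlow. lra.
Qed.

Lemma dot_sq_le n w x : nonneg n x ->
  dot n w x * dot n w x <= (sumn n (fun i => Rabs (w i)) * sumn n x)
                           * (sumn n (fun i => Rabs (w i)) * sumn n x).
Proof.
  intros Hx. set (W := sumn n (fun i => Rabs (w i))).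
  assert (HW : 0 <= W) by (apply sumn_nonneg; intros; apply Rabs_pos).
  assert (Hd : Rabs (dot n w x) <= W * sumn n x).
  { unfold dot. eapply Rle_trans; [apply sumn_abs|]. rewrite <- sumn_scal.
    apply sumn_le. intros i Hi. rewrite Rabs_mult, (Rabs_pos_eq (x i)) by auto.
    apply Rmult_le_compat_r; auto.
    apply (sumn_ge_term n (fun j => Rabs (w j))); auto. intros; apply Rabs_pos. }
  replace (dot n w x * dot n w x) with (Rabs (dot n w x) * Rabs (dot n w x))
    by (rewrite <- Rabs_mult; apply Rabs_pos_eq, Rle_0_sqr).
  apply Rmult_le_compat; auto; apply Rabs_pos.
Qed.

Lemma strict_face_min n A m : copositive n A ->
  (forall x, nonneg n x -> supported n m x -> nonzero_vec n x -> 0 < qform n A x x) ->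
  exists c, 0 < c /\ forall x, nonneg n x -> supported n m x ->
    c * (sumn n x * sumn n x) <= qform n A x x.
Proof.
  intros [_ Hcop] Hstrict.
  (* a function positive on the whole box which equals x^T A x on the
     part of the face where sum_i x_i = 1 *)
  set (off := fun x : vec => sumn n (fun i => if m i then 0 else x i * x i)).
  set (F := fun x => qform n A x x + (sumn n x - 1) * (sumn n x - 1) + off x).
  assert (HL : Lip n F).
  { apply Lip_plus; [apply Lip_plus; [apply Lip_qform|]|].
    - assert (Hs : Lip n (fun x => sumn n (fun i => x i) + - 1))
        by (apply Lip_plus; [apply (Lip_sumn n n (fun i x => x i)); apply Lip_coord
                            | apply Lip_const]).
      apply (Lip_mult n _ _ Hs Hs).
    - apply (Lip_sumn n n (fun i x => if m i then 0 else x i * x i)). intros i Hi.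
      destruct (m i); [apply Lip_const | apply Lip_mult; apply Lip_coord; auto]. }
  assert (Hoff : forall x, 0 <= off x)
    by (intros x; apply sumn_nonneg; intros i _; destruct (m i); [lra | apply Rle_0_sqr]).
  assert (HF : forall x, inbox n x -> 0 < F x).
  { intros x Hx. assert (Hn : nonneg n x) by (intros i Hi; apply Hx; auto).
    assert (0 <= qform n A x x) by auto.
    assert (0 <= (sumn n x - 1) * (sumn n x - 1)) by apply Rle_0_sqr.
    unfold F. destruct (classic (supported n m x)) as [Hs|Hs].
    - destruct (classic (nonzero_vec n x)) as [Hz|Hz].
      + assert (0 < qform n A x x) by auto. specialize (Hoff x). lra.
      + assert (E : sumn n x = 0).
        { apply sumn_zero. intros i Hi. apply NNPP. intros Hxi. apply Hz. exists i; auto. }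
        rewrite E. specialize (Hoff x). lra.
    - assert (0 < off x).
      { apply NNPP. intros Hc. apply Hs. intros i Hi Hm. apply NNPP. intros Hxi. apply Hc.
        assert (Hle : (if m i then 0 else x i * x i) <= off x).
        { apply (sumn_ge_term n (fun j => if m j then 0 else x j * x j)); auto.
          intros j _. destruct (m j); [lra | apply Rle_0_sqr]. }
        rewrite Hm in Hle. assert (0 < x i * x i) by (apply Rsqr_pos_lt; auto). lra. }
      lra. }
  destruct (box_min n F HL HF) as [c [Hc Hmin]].
  exists c. split; auto. intros x Hx Hs.
  set (S := sumn n x).
  assert (HS : 0 <= S) by (apply sumn_nonneg; auto).
  destruct (Req_dec S 0) as [E|E].
  - rewrite E, Rmult_0_l, Rmult_0_r. auto.
  - (* rescale x onto the hyperplane sum_i x_i = 1 *)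
    set (y := fun i => x i / S).
    assert (Hxy : forall i, (i < n)%nat -> x i = S * y i) by (intros; unfold y; field; auto).
    assert (Hy : inbox n y).
    { intros i Hi. unfold y. assert (0 <= x i) by auto.
      assert (x i <= S) by (apply sumn_ge_term; auto). split.
      - unfold Rdiv. apply Rmult_le_pos; [lra | apply Rlt_le, Rinv_0_lt_compat; lra].
      - apply (Rmult_le_reg_r S); [lra|]. field_simplify; lra. }
    assert (HSy : sumn n y = 1).
    { unfold y. rewrite (sumn_ext n _ (fun i => / S * x i)) by (intros; unfold Rdiv; ring).
      rewrite sumn_scal. fold S. field. auto. }
    assert (Hoffy : off y = 0).
    { apply sumn_zero. intros i Hi. destruct (m i) eqn:Em; auto.
      unfold y. rewrite (Hs i Hi Em). field. auto. }
    specialize (Hmin y Hy). unfold F in Hmin. rewrite HSy, Hoffy in Hmin.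
    rewrite (qform_scale n A x y S Hxy).
    assert (0 <= S * S) by apply Rle_0_sqr. nra.
Qed.

Section FaceBound.

Variables (n : nat) (A : mat) (w : vec).
Hypothesis HC : copositive n A.
Hypothesis Hortho : forall u, is_zero_of n A u -> dot n w u = 0.

Definition face_bound (m : nat -> bool) : Prop :=
  exists g, 0 < g /\ forall x, nonneg n x -> supported n m x ->
    g * (dot n w x * dot n w x) <= qform n A x x.

Lemma face_bound_strict m : ~ (exists u, is_zero_of n A u /\ supported n m u) -> face_bound m.
Proof.
  intros Hno.
  destruct (strict_face_min n A m HC) as [c [Hc Hmin]].
  { intros x Hx Hs Hnz. assert (0 <= qform n A x x) by (apply HC; auto).
    destruct (Req_dec (qform n A x x) 0) as [E|E]; [|lra].
    exfalso. apply Hno. exists x. repeat split; auto. }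
  set (W := sumn n (fun i => Rabs (w i))).
  assert (HW : 0 <= W) by (apply sumn_nonneg; intros; apply Rabs_pos).
  exists (c / (W * W + 1)). split; [apply Rdiv_lt_0_compat; nra|].
  intros x Hx Hs. specialize (Hmin x Hx Hs).
  assert (Hd := dot_sq_le n w x Hx). fold W in Hd.
  set (S := sumn n x) in *. set (d := dot n w x) in *.
  assert (Hq : 0 <= qform n A x x) by (apply HC; auto).
  apply (Rmult_le_reg_r (W * W + 1)); [nra|].
  replace (c / (W * W + 1) * (d * d) * (W * W + 1)) with (c * (d * d)) by (field; nra).
  assert (0 <= d * d) by apply Rle_0_sqr.
  assert (0 <= S * S) by apply Rle_0_sqr.
  assert (c * (d * d) <= c * (W * W) * (S * S)) by nra.
  nra.
Qed.

(* A face containing a zero u of A reduces to the faces obtained by removing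
   one index of Supp(u), through the ratio test x = (x - t u) + t u. *)
Lemma face_bound_reduce m u : is_zero_of n A u -> supported n m u ->
  (forall i, (i < n)%nat -> u i <> 0 -> face_bound (mrem m i)) -> face_bound m.
Proof.
  intros Hz Hsu Hsub.
  destruct (common_pos_bound (seq 0 n) (fun i g => u i <> 0 -> forall x, nonneg n x ->
     supported n (mrem m i) x -> g * (dot n w x * dot n w x) <= qform n A x x))
    as [g [Hg Hall]].
  { intros i g g' Hq [Hg' Hle] Hui x Hx Hs. specialize (Hq Hui x Hx Hs).
    assert (0 <= dot n w x * dot n w x) by apply Rle_0_sqr. nra. }
  { intros i Hi. apply in_seq in Hi.
    destruct (Req_dec (u i) 0) as [E|E]; [exists 1; split; [lra | tauto]|].
    destruct (Hsub i ltac:(lia) E) as [g [Hg Hb]]. exists g. auto. }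
  exists g. split; auto. intros x Hx Hsx.
  destruct Hz as [Hu [Hunz Hqu]].
  destruct (ratio_step n x u Hx Hu Hunz) as [t [i0 [Ht [Hi0 [Hui0 [Hy Hkill]]]]]].
  set (y := vadd x (- t) u) in *.
  assert (Hys : supported n (mrem m i0) y).
  { intros i Hi Hm. unfold mrem in Hm. destruct (m i) eqn:Em.
    - simpl in Hm. destruct (Nat.eqb_spec i i0) as [->|]; [auto | discriminate].
    - unfold y, vadd. rewrite (Hsx i Hi Em), (Hsu i Hi Em). ring. }
  assert (Hby : g * (dot n w y * dot n w y) <= qform n A y y)
    by (apply (Hall i0); auto; apply in_seq; lia).
  assert (Ex : qform n A x x = qform n A (vadd y t u) (vadd y t u))
    by (apply qform_ext; intros i Hi; unfold y, vadd; ring).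
  assert (Edx : dot n w x = dot n w y)
    by (unfold y; rewrite dot_vadd, (Hortho u); [ring | repeat split; auto]).
  rewrite Ex, Edx, qform_expand, Hqu, (qform_sym n A y u) by apply HC.
  assert (0 <= qform n A u y) by (apply (zero_cross_nonneg n A u); auto).
  assert (0 <= t * qform n A u y) by (apply Rmult_le_pos; auto).
  lra.
Qed.

Lemma face_bound_all m : face_bound m.
Proof.
  remember (card n m) as k eqn:Hk. revert m Hk.
  induction k as [k IH] using lt_wf_ind. intros m Hk.
  destruct (classic (exists u, is_zero_of n A u /\ supported n m u))
    as [[u [Hz Hsu]]|Hno]; [|apply face_bound_strict; auto].
  apply (face_bound_reduce m u Hz Hsu). intros i Hi Hui.
  assert (Hmi : m i = true)
    by (destruct (m i) eqn:Em; [auto | exfalso; apply Hui, Hsu; auto]).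
  apply (IH (card n (mrem m i))); auto. rewrite Hk. apply card_mrem; auto.
Qed.

End FaceBound.

Theorem corollary4p4 (n : nat) (A : mat) (w : vec) :
  copositive n A -> nonzero_vec n w ->
  (irreducible_wrt n A (outer w) <->
   exists u, minimal_zero n A u /\ dot n w u <> 0).
Proof.
  intros HC _. split.
  - (* if every minimal zero is orthogonal to w, then so is every zero, and
       the face bound on the whole orthant makes A - g w w^T copositive *)
    intros Hirr. apply NNPP. intros Hno.
    assert (Hortho : forall u, is_zero_of n A u -> dot n w u = 0).
    { intros u Hu. apply NNPP. intros Hd. apply Hno.
      apply (minimal_zero_exists n A w u); auto. }
    destruct (face_bound_all n A w HC Hortho (fun _ => true)) as [g [Hg Hb]].
    apply Hirr. exists g. split; auto. split.
    + intros i j Hi Hj. unfold msub_scal, outer. rewrite (proj1 HC i j Hi Hj). ring.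
    + intros x Hx. rewrite qform_msub_outer.
      assert (g * (dot n w x * dot n w x) <= qform n A x x)
        by (apply Hb; auto; intros i _ E; discriminate). lra.
  - (* a zero u with w^T u <> 0 is a negative direction for every A - g w w^T *)
    intros [u [[[Hu [_ Hqu]] _] Hd]] [g [Hg [_ Hcop]]].
    specialize (Hcop u Hu). rewrite qform_msub_outer, Hqu in Hcop.
    assert (0 < dot n w u * dot n w u) by (apply Rsqr_pos_lt; auto). nra.
Qed.
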